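(* Let $D>1$ be a square-free integer with $-D\equiv 2$ or $3\pmod 4$, and suppose $C(-4D)\cong(\mathbb{Z}/2\mathbb{Z})^n$ for some $n\ge 0$. Let $c=p_1^{n_1}\cdots p_k^{n_k}$ with distinct primes $p_i$ and $n_i\ge1$. Then there is a normalized solution to $x^2+Dy^2=z^2$ of the form $(a,b,c)$ if and only if all $p_i\in S$. Further, if all $p_i\in S$, there are exactly $2^{k-1}$ normalized solutions of the form $(a,b,c)$.
   Context: $S:=\{\text{odd primes } q : \left(\frac{-D}{q}\right)=1\}$, with $\left(\frac{\cdot}{q}\right)$ the Legendre symbol. A normalized solution of $x^2+Dy^2=z^2$ is a triple $(a,b,c)$ of natural numbers with $a^2+Db^2=c^2$ and $\gcd(a,b,c)=1$. $C(-4D)$ is the form class group of discriminant $-4D$ (classes of primitive positive-definite binary quadratic forms of discriminant $-4D$ under $\mathrm{SL}_2(\mathbb{Z})$-equivalence, with Dirichlet composition). *)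

From mathcomp Require Import all_boot all_order all_algebra.
Set Implicit Arguments. Unset Strict Implicit. Unset Printing Implicit Defensive.
Import Order.TTheory GRing.Theory Num.Theory.
Local Open Scope ring_scope.

Definition legendre (a : int) (q : nat) : int :=
  if (q%:Z %| a)%Z then 0
  else if [exists x : 'I_q, (q%:Z %| (x%:Z) ^+ 2 - a)%Z] then 1 else -1.

Definition inS (D : nat) (q : nat) : Prop :=
  [/\ prime q, odd q & legendre (- D%:Z) q = 1].

Definition squarefree (D : nat) : Prop :=
  forall p : nat, prime p -> ~~ (p * p %| D)%N.

Definition normalized (D a b c : nat) : Prop :=
  [/\ (0 < a)%N, (0 < b)%N, (0 < c)%N,
      (a ^ 2 + D * b ^ 2 = c ^ 2)%N & gcdn (gcdn a b) c = 1%N].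

(* (a, b, c) stands for a x^2 + b x y + c y^2 *)
Definition form := (int * int * int)%type.
Definition fa (f : form) : int := f.1.1.
Definition fb (f : form) : int := f.1.2.
Definition fc (f : form) : int := f.2.

Definition disc (f : form) : int := fb f ^+ 2 - 4 * fa f * fc f.

Definition feval (f : form) (x y : int) : int :=
  fa f * x ^+ 2 + fb f * x * y + fc f * y ^+ 2.

Definition prim_pd (D : nat) (f : form) : Prop :=
  [/\ disc f = - (4 * D%:Z), 0 < fa f & gcdz (gcdz (fa f) (fb f)) (fc f) = 1].

(* f(px + qy, rx + sy) *)
Definition form_act (f : form) (p q r s : int) : form :=
  (feval f p r,
   2 * fa f * p * q + fb f * (p * s + q * r) + 2 * fc f * r * s,
   feval f q s).

Definition form_equiv (f g : form) : Prop :=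
  exists p q r s : int, p * s - q * r = 1 /\ g = form_act f p q r s.

Definition principal (D : nat) : form := (1, 0, D%:Z).

Definition dirichlet (f g h : form) : Prop :=
  let a1 := fa f in let b1 := fb f in let a2 := fa g in let b2 := fb g in
  let Dl := disc f in
  exists B : int,
  [/\ disc g = Dl,
      (2 %| b1 + b2)%Z,
      gcdz (gcdz a1 a2) ((b1 + b2) %/ 2)%Z = 1,
      [/\ (2 * a1 %| B - b1)%Z, (2 * a2 %| B - b2)%Z &
           (4 * a1 * a2 %| B ^+ 2 - Dl)%Z] &
      h = (a1 * a2, B, ((B ^+ 2 - Dl) %/ (4 * a1 * a2))%Z)].

(* [f][g] = [h] in the form class group (composition of classes via
   Dirichlet composition of united representatives). *)
Definition class_prod (f g h : form) : Prop :=
  exists f' g' h', [/\ form_equiv f f', form_equiv g g', dirichlet f' g' h'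
                     & form_equiv h' h].

(* C(-4D) is an elementary abelian 2-group, i.e. C(-4D) ~ (Z/2Z)^n for
   some n >= 0 (C(-4D) is finite abelian): every class squares to the
   identity class (that of the principal form). *)
Definition classgroup_elem2 (D : nat) : Prop :=
  forall f h : form, prim_pd D f -> class_prod f f h -> form_equiv h (principal D).

From Pilot Require Import Defs.
From mathcomp Require Import all_boot all_order all_algebra.
From mathcomp Require Import zify ring.
Import Order.TTheory GRing.Theory Num.Theory.
Set Implicit Arguments. Unset Strict Implicit. Unset Printing Implicit Defensive.

(* Both halves run through the square roots of [-D] modulo [c^2].  If [(a, b, c)] is a
   normalized solution and [p | c], then [p] divides neither [b] nor [D] ([D] is squarefree),
   [(a/b)^2 = -D] modulo [p], and [D = 1, 2 (mod 4)] makes [c] odd: so [p] lies in [S].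
   Conversely, if all prime factors of [c] lie in [S], Hensel lifting and the Chinese
   remainder theorem give exactly [2^k] roots of [t^2 = -D] modulo [c^2].  A normalized
   solution with a sign [e] yields the root [t = e a / b (mod c^2)].  Distinct signed
   solutions give distinct roots, because by Lagrange's identity two representations of [M]
   by [x^2 + D y^2] whose cross term [x y' - x' y] is divisible by [M] are proportional.
   Every root [t] arises: the form [(c, 2t, (t^2 + D)/c)] of discriminant [-4D] composes
   with itself to [(c^2, 2t, _)], which is equivalent to [x^2 + D y^2] because [C(-4D)] is
   2-torsion, and the change of variables gives a proper representation of [c^2] with root
   [t].  Hence twice the number of normalized solutions is [2^k]. *)

Definition sqrt_negD (D m : nat) : seq nat := [seq t <- iota 0 m | m %| t ^ 2 + D].

Lemma sqrt_negD_uniq D m : uniq (sqrt_negD D m).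
Proof. by rewrite filter_uniq // iota_uniq. Qed.

Lemma mem_sqrt_negD D m t : (t \in sqrt_negD D m) = (t < m) && (m %| t ^ 2 + D).
Proof. by rewrite mem_filter mem_iota add0n andbC. Qed.

Lemma dvdn_sqrD_mod D m d x : d %| m -> (d %| (x %% m) ^ 2 + D) = (d %| x ^ 2 + D).
Proof.
move=> dm; rewrite /dvdn -modnDml -modnXm (modn_dvdm _ dm).
by rewrite modnXm modnDml.
Qed.

Lemma size_sqrt_negD_mul D m n : 0 < m -> 0 < n -> coprime m n ->
  size (sqrt_negD D (m * n)) = size (sqrt_negD D m) * size (sqrt_negD D n).
Proof.
move=> m_gt0 n_gt0 co; set split_mod := fun t => (t %% m, t %% n).
have mmn : m %| m * n by apply: dvdn_mulr.
have nmn : n %| m * n by apply: dvdn_mull.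
have split_inj : {in sqrt_negD D (m * n) &, injective split_mod}.
  move=> x y; rewrite !mem_sqrt_negD => /andP[xmn _] /andP[ymn _] [eqm eqn].
  have : x == y %[mod m * n] by rewrite chinese_remainder // eqm eqn !eqxx.
  by rewrite !modn_small // => /eqP.
rewrite -(size_map split_mod) -(size_allpairs pair); apply/perm_size/uniq_perm.
- by rewrite map_inj_in_uniq // sqrt_negD_uniq.
- by apply: allpairs_uniq; rewrite ?sqrt_negD_uniq // => -[? ?] [? ?] _ _ [-> ->].
move=> [u v]; apply/mapP/allpairsP.
- move=> [x]; rewrite mem_sqrt_negD => /andP[_ xD] [-> ->].
  exists (x %% m, x %% n); rewrite !mem_sqrt_negD !ltn_pmod //= !dvdn_sqrD_mod //.
  by rewrite !(dvdn_trans _ xD).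
- move=> [[u' v'] /=]; rewrite !mem_sqrt_negD => -[/andP[um uD] /andP[vn vD] [-> ->]].
  set x := chinese m n u' v' %% (m * n).
  have xm : x %% m = u' by rewrite (modn_dvdm _ mmn) chinese_modl // modn_small.
  have xn : x %% n = v' by rewrite (modn_dvdm _ nmn) chinese_modr // modn_small.
  exists x; last by rewrite /split_mod xm xn.
  rewrite mem_sqrt_negD ltn_pmod ?muln_gt0 ?m_gt0 //= Gauss_dvd //.
  by rewrite -(dvdn_sqrD_mod D x (dvdnn m)) // -(dvdn_sqrD_mod D x (dvdnn n)) // xm xn uD.
Qed.

Lemma prime_ndvd_sqrt_negD D p t : prime p -> ~~ (p %| D) -> p %| t ^ 2 + D -> ~~ (p %| t).
Proof.
by move=> pp pD ptD; apply: contra pD => pt; rewrite -(dvdn_addr D (dvdn_exp (isT : 0 < 2) pt)).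
Qed.

Lemma hensel_lift_sqrt_negD D p f t : prime p -> odd p -> ~~ (p %| t) ->
  p ^ f.+1 %| t ^ 2 + D -> exists t', p ^ f.+2 %| t' ^ 2 + D.
Proof.
move=> pp op pt /dvdnP[w Ew].
have t2_gt0 : 0 < 2 * t by rewrite muln_gt0 /= lt0n; apply: contra pt => /eqP->.
have co : coprime (2 * t) p by rewrite coprime_sym coprimeMr coprimen2 op prime_coprime.
have [u v Euv _] := egcdnP p t2_gt0; rewrite (eqP co) in Euv.
case: p pp op pt Ew co Euv => // p' _ _ _ Ew _ Euv.
(* [u * 2t = 1 (mod p)], so the correction [w u (p - 1) p^(f+1)] kills [w] modulo [p]. *)
exists (t + w * u * p' * p'.+1 ^ f.+1); apply/dvdnP.
exists (w * (v * p' + 1) + (w * u * p') ^ 2 * p'.+1 ^ f).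
have -> : (t + w * u * p' * p'.+1 ^ f.+1) ^ 2 + D =
   (t ^ 2 + D) + (u * (2 * t)) * (w * p' * p'.+1 ^ f.+1) + (w * u * p' * p'.+1 ^ f.+1) ^ 2.
  by ring.
by rewrite Ew Euv !expnS; ring.
Qed.

Lemma sqrt_negD_pfactor_exists D p f : prime p -> odd p -> ~~ (p %| D) ->
  (exists x, p %| x ^ 2 + D) -> exists t, p ^ f.+1 %| t ^ 2 + D.
Proof.
move=> pp op pD [x px]; elim: f => [|f [t ht]]; first by exists x; rewrite expn1.
have pt : ~~ (p %| t).
  exact: prime_ndvd_sqrt_negD pD (dvdn_trans (dvdn_exp2l p (ltn0Sn f)) ht).
exact: hensel_lift_sqrt_negD ht.
Qed.

Section IntSquares.
Local Open Scope ring_scope.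

Lemma dvdz_sqrD_nat (m t D : nat) : (m%:Z %| t%:Z ^+ 2 + D%:Z)%Z = (m %| t ^ 2 + D)%N.
Proof. by rewrite dvdzE (_ : t%:Z ^+ 2 + D%:Z = (t ^ 2 + D)%N :> int) //; lia. Qed.

Lemma odd_pfactor_dvd_sqr_diff (p f : nat) (x y : int) : prime p -> odd p -> (0 < f)%N ->
  ~~ (p%:Z %| x)%Z -> ((p ^ f)%:Z %| x ^+ 2 - y ^+ 2)%Z ->
  ((p ^ f)%:Z %| x - y)%Z || ((p ^ f)%:Z %| x + y)%Z.
Proof.
move=> pp op f_gt0 px; rewrite subr_sqr.
have coprime_pf z : ~~ (p%:Z %| z)%Z -> coprimez (p ^ f)%:Z z.
  by rewrite coprimezE absz_nat coprime_pexpl // prime_coprime // dvdzE.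
case: (boolP (p%:Z %| x - y)%Z) => [pxy|/coprime_pf cop]; last first.
  by rewrite mulrC Gauss_dvdzl // => ->; rewrite orbT.
suff /coprime_pf cop : ~~ (p%:Z %| x + y)%Z by rewrite Gauss_dvdzl // => ->.
(* [p] divides neither [2] nor [x], hence not [(x - y) + (x + y) = 2 x]. *)
apply: contra px => pxy'; have := rpredD pxy pxy'.
rewrite (_ : x - y + (x + y) = 2 * x)%R; last by ring.
by rewrite Gauss_dvdzr // coprimezE /= coprimen2.
Qed.

End IntSquares.

Lemma inSP D p : prime p ->
  inS D p <-> [/\ odd p, ~~ (p %| D) & exists x, p %| x ^ 2 + D].
Proof.
have dvd_negD : (p%:Z %| (- D%:Z)%R)%Z = (p %| D) by rewrite rpredN dvdzE.
have root_ord (x : nat) : (p%:Z %| (x%:Z ^+ 2 - - D%:Z)%R)%Z = (p %| x ^ 2 + D).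
  by rewrite opprK dvdz_sqrD_nat.
move=> pp; rewrite /inS /legendre dvd_negD; split=> [[_ op]|[op pD [x px]]].
  case: ifP => // pD; case: existsP => // -[x]; rewrite root_ord => px _.
  by split=> //; exists x.
split; rewrite // (negbTE pD); case: existsP => // -[].
by exists (Ordinal (ltn_pmod x (prime_gt0 pp))); rewrite root_ord dvdn_sqrD_mod.
Qed.

Lemma sqrt_negD_pfactor_pm D p f t u : prime p -> odd p -> ~~ (p %| D) -> 0 < f ->
  u < p ^ f -> p ^ f %| t ^ 2 + D -> p ^ f %| u ^ 2 + D -> t < p ^ f ->
  u = t \/ u + t = p ^ f.
Proof.
move=> pp op pD f_gt0; set q := p ^ f => u_lt_q qt qu t_lt_q.
have pu : ~~ (p%:Z %| u%:Z)%Z.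
  by rewrite dvdzE; apply: prime_ndvd_sqrt_negD pD (dvdn_trans (dvdn_exp f_gt0 (dvdnn p)) qu).
have qut : (q%:Z %| (u%:Z ^+ 2 - t%:Z ^+ 2)%R)%Z.
  rewrite (_ : (u%:Z ^+ 2 - t%:Z ^+ 2 = (u%:Z ^+ 2 + D%:Z) - (t%:Z ^+ 2 + D%:Z))%R); last by ring.
  by rewrite rpredB ?dvdz_sqrD_nat.
case/orP: (odd_pfactor_dvd_sqr_diff pp op f_gt0 pu qut).
  by rewrite -eqz_mod_dvd !modz_nat !modn_small // => /eqP[]; left.
rewrite -PoszD dvdzE !absz_nat => /dvdnP[[|[|k]] Ek].
- by left; move/eqP: Ek; rewrite mul0n addn_eq0 => /andP[/eqP-> /eqP->].
- by right; rewrite Ek mul1n.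
- exfalso; have := leq_add u_lt_q (ltnW t_lt_q).
  by rewrite addSn Ek !mulSn ltn_add2l ltnNge leq_addr.
Qed.

Lemma size_sqrt_negD_pfactor D p f : prime p -> odd p -> ~~ (p %| D) ->
  (exists x, p %| x ^ 2 + D) -> 0 < f -> size (sqrt_negD D (p ^ f)) = 2.
Proof.
move=> pp op pD pex; case: f => // f f_gt0.
have [t0 ht0] := sqrt_negD_pfactor_exists f pp op pD pex.
set q := p ^ f.+1 in ht0 *; set t := t0 %% q.
have q_gt0 : 0 < q by rewrite expn_gt0 prime_gt0.
have pq : p %| q by rewrite dvdn_exp.
have t_lt_q : t < q by rewrite ltn_pmod.
have qt : q %| t ^ 2 + D by rewrite dvdn_sqrD_mod.
have t_gt0 : 0 < t.
  rewrite lt0n; apply: contra pD => /eqP t_eq0.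
  by move: qt; rewrite t_eq0 add0n; apply: dvdn_trans.
have qt' : q %| (q - t) ^ 2 + D.
  rewrite -dvdz_sqrD_nat -subzn; last exact: ltnW.
  rewrite (_ : ((q%:Z - t%:Z) ^+ 2 + D%:Z = q%:Z * (q%:Z - 2 * t%:Z) + (t%:Z ^+ 2 + D%:Z))%R).
    by rewrite rpredD ?dvdz_mulr // dvdz_sqrD_nat.
  by ring.
have t_neq : t != q - t.
  apply/eqP => tE; have : odd q by rewrite oddX op orbT.
  by rewrite -(subnKC (ltnW t_lt_q)) -tE addnn odd_double.
have -> : 2 = size [:: t; q - t] by [].
apply/perm_size/uniq_perm; first exact: sqrt_negD_uniq.
  by rewrite /= mem_seq1 t_neq.
move=> u; rewrite mem_sqrt_negD !inE; apply/andP/orP => [[u_lt_q qu]|].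
  case: (sqrt_negD_pfactor_pm pp op pD f_gt0 u_lt_q qt qu t_lt_q) => [->|uE]; first by left.
  by right; rewrite /q -uE addnK.
by case=> /eqP->; rewrite ?qt ?qt' ?t_lt_q ?ltn_subrL ?t_gt0.
Qed.

Lemma size_primes_mul_pfactor m p e : prime p -> coprime p m -> 0 < m -> 0 < e ->
  size (primes (m * p ^ e)) = (size (primes m)).+1.
Proof.
move=> pp pm m_gt0 e_gt0; rewrite -[_.+1]/(size (p :: primes m)).
apply/perm_size/uniq_perm; rewrite /= ?primes_uniq // ?andbT.
  by rewrite mem_primes pp m_gt0 -prime_coprime.
have pe_gt0 : 0 < p ^ e by rewrite expn_gt0 prime_gt0.
by move=> r; rewrite primesM // primesX // (primes_prime pp) !inE orbC.
Qed.

Lemma size_sqrt_negD D n : 0 < n -> (forall p, prime p -> p %| n -> inS D p) ->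
  size (sqrt_negD D n) = 2 ^ size (primes n).
Proof.
have [N] := ubnP n; elim: N n => // N IHN n n_lt_N n_gt0 good.
have [n_le1 | n_gt1] := leqP n 1.
  have -> : n = 1 by apply/eqP; rewrite eqn_leq n_le1.
  by rewrite /sqrt_negD /= dvd1n.
have pp := pdiv_prime n_gt1; set p := pdiv n in pp *.
have [m pm nE] := pfactor_coprime pp n_gt0; set e := logn p n in nE.
have e_gt0 : 0 < e by rewrite logn_gt0 mem_primes pp n_gt0 pdiv_dvd.
have m_gt0 : 0 < m by move: n_gt0; rewrite nE muln_gt0 => /andP[].
have [op pD pex] := (inSP D pp).1 (good p pp (pdiv_dvd n)).
have pe_gt1 : 1 < p ^ e by rewrite -(expn0 p) ltn_exp2l ?prime_gt1.
have m_lt_n : m < n by rewrite nE ltn_Pmulr.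
have co : coprime m (p ^ e) by rewrite coprime_sym coprimeXl.
rewrite nE size_sqrt_negD_mul ?(ltnW pe_gt1) // size_sqrt_negD_pfactor //.
rewrite size_primes_mul_pfactor // expnS mulnC IHN //.
- exact: leq_trans m_lt_n n_lt_N.
- by move=> r rp rm; apply: good; rewrite // nE dvdn_mulr.
Qed.

Section Forms.
Local Open Scope ring_scope.

Lemma form_act_id f : form_act f 1 0 0 1 = f.
Proof.
by case: f => [[a b] c]; rewrite /form_act /feval /fa /fb /fc /=; congr (_, _, _); ring.
Qed.

Lemma form_act_comp f p q r s p' q' r' s' :
  form_act (form_act f p q r s) p' q' r' s' =
  form_act f (p * p' + q * r') (p * q' + q * s') (r * p' + s * r') (r * q' + s * s').
Proof.
by case: f => [[a b] c]; rewrite /form_act /feval /fa /fb /fc /=; congr (_, _, _); ring.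
Qed.

Lemma form_equiv_refl f : form_equiv f f.
Proof. by exists 1, 0, 0, 1; rewrite form_act_id mulr1 mulr0 subr0. Qed.

Lemma form_equiv_sym f g : form_equiv f g -> form_equiv g f.
Proof.
case=> p [q [r [s [det ->]]]]; exists s, (- q), (- r), p.
split; first by rewrite -det; ring.
by rewrite form_act_comp -{1}[f]form_act_id; congr form_act; rewrite -?det; ring.
Qed.

Lemma form_act_principal D p q r s : form_act (principal D) p q r s =
  (p ^+ 2 + D%:Z * r ^+ 2, 2 * (p * q + D%:Z * r * s), q ^+ 2 + D%:Z * s ^+ 2).
Proof. by rewrite /form_act /feval /fa /fb /fc /=; congr (_, _, _); ring. Qed.

Lemma principal_equiv_repr D A t C : form_equiv (principal D) (A, 2 * t, C) ->
  exists x y, [/\ x ^+ 2 + D%:Z * y ^+ 2 = A, (A %| t * y - x)%Z & coprimez x y].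
Proof.
case=> p [q [r [s [det]]]]; rewrite form_act_principal => -[-> t2E _].
have -> : t = p * q + D%:Z * r * s by apply: (@mulfI _ 2); rewrite // t2E.
exists (- p), r; split; first by rewrite sqrrN.
- apply/dvdzP; exists s; apply/eqP; rewrite -subr_eq0; apply/eqP.
  transitivity (p * (1 - (p * s - q * r))); first by ring.
  by rewrite det subrr mulr0.
- by apply/coprimezP; exists (- s, - q) => /=; rewrite -det; ring.
Qed.

Definition root_form (D : nat) (c t : int) : Defs.form := (c, 2 * t, ((t ^+ 2 + D%:Z) %/ c)%Z).

Section RootForm.
Variables (D : nat) (c t : int).
Hypotheses (c_gt0 : 0 < c) (c_2t : coprimez c (2 * t)).

Lemma disc_root_form : (c %| t ^+ 2 + D%:Z)%Z -> disc (root_form D c t) = - (4 * D%:Z).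
Proof.
move=> ct; rewrite /disc /fa /fb /fc /= -mulrA [c * _]mulrC divzK //; ring.
Qed.

Lemma prim_pd_root_form : (c %| t ^+ 2 + D%:Z)%Z -> prim_pd D (root_form D c t).
Proof.
move=> ct; split; rewrite ?disc_root_form //.
by rewrite /fa /fb /fc /= (eqP c_2t) gcd1z.
Qed.

Lemma dirichlet_root_form_sqr : (c * c %| t ^+ 2 + D%:Z)%Z ->
  exists C, dirichlet (root_form D c t) (root_form D c t) (c * c, 2 * t, C).
Proof.
move=> cct; have ct : (c %| t ^+ 2 + D%:Z)%Z := dvdz_trans (dvdz_mulr c (dvdzz c)) cct.
set g := root_form D c t.
have dg := disc_root_form ct.
exists (((2 * t) ^+ 2 - disc g) %/ (4 * c * c))%Z, (2 * t).
rewrite /fa /fb /= -/g; split => //.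
- by apply/dvdzP; exists (2 * t); ring.
- rewrite gcdzz (_ : 2 * t + 2 * t = 2 * (2 * t)); last by ring.
  by rewrite mulKz //; apply/eqP.
- split; rewrite ?subrr ?dvdz0 //.
  rewrite dg (_ : (2 * t) ^+ 2 - - (4 * D%:Z) = 4 * (t ^+ 2 + D%:Z)); last by ring.
  by rewrite -!mulrA dvdz_mul2l.
Qed.

End RootForm.

Lemma elem2_root_repr D (c t : int) : classgroup_elem2 D -> 0 < c ->
  coprimez c (2 * t) -> (c * c %| t ^+ 2 + D%:Z)%Z ->
  exists x y, [/\ x ^+ 2 + D%:Z * y ^+ 2 = c * c, (c * c %| t * y - x)%Z & coprimez x y].
Proof.
move=> el c_gt0 c_2t cct; have [C gg] := dirichlet_root_form_sqr c_2t cct.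
apply: (@principal_equiv_repr D _ _ C); apply/form_equiv_sym/(el (root_form D c t)).
  exact/prim_pd_root_form/(dvdz_trans _ cct)/dvdz_mulr.
by exists (root_form D c t), (root_form D c t), (c * c, 2 * t, C);
  split; try exact: form_equiv_refl.
Qed.

End Forms.

Lemma coprime_prime_ndvd m n : 0 < m ->
  (forall p, prime p -> p %| m -> ~~ (p %| n)) -> coprime m n.
Proof.
move=> m_gt0 ndvd; have [g_le1|g_gt1] := leqP (gcdn m n) 1.
  by rewrite /coprime eqn_leq g_le1 gcdn_gt0 m_gt0.
have := ndvd _ (pdiv_prime g_gt1) (dvdn_trans (pdiv_dvd _) (dvdn_gcdl m n)).
by rewrite (dvdn_trans (pdiv_dvd _) (dvdn_gcdr m n)).
Qed.

Section QuotMod.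
Local Open Scope ring_scope.

(* [x / b] modulo [m]: [(egcdz b m).1] inverts [b] modulo [m] when [coprime b m]. *)
Definition quot_mod (m : nat) (x : int) (b : nat) : nat :=
  `|((x * (egcdz b m).1) %% m)%Z|%N.

Variables (m b : nat) (x : int).
Hypotheses (m_gt0 : (0 < m)%N) (b_m : coprime b m).

Lemma quot_mod_lt : (quot_mod m x b < m)%N.
Proof. by rewrite -ltz_nat gez0_abs ?modz_ge0 ?ltz_pmod // -lt0n. Qed.

Lemma quot_modP : (m%:Z %| (quot_mod m x b)%:Z * b%:Z - x)%Z.
Proof.
rewrite /quot_mod gez0_abs ?modz_ge0 -?lt0n //; case: egcdzP => u v /= Euv _.
have {}Euv : u * b%:Z + v * m%:Z = 1 by rewrite Euv /gcdz /= (eqP b_m).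
apply/dvdzP; exists (- x * v - (x * u %/ m)%Z * b%:Z).
by rewrite /modz -[x in _ - x]mulr1 -Euv; ring.
Qed.

Lemma quot_mod_unique t : (t < m)%N -> (m%:Z %| t%:Z * b%:Z - x)%Z -> t = quot_mod m x b.
Proof.
move=> t_lt_m tP; have := rpredB tP quot_modP.
rewrite (_ : t%:Z * b%:Z - x - _ = (t%:Z - (quot_mod m x b)%:Z) * b%:Z); last by ring.
rewrite Gauss_dvdzl ?coprimezE 1?coprime_sym // -eqz_mod_dvd !modz_nat.
by rewrite !modn_small ?quot_mod_lt // => /eqP[].
Qed.

Lemma quot_mod_sqrt_negD (D : nat) : (m%:Z %| x ^+ 2 + D%:Z * b%:Z ^+ 2)%Z ->
  (m %| quot_mod m x b ^ 2 + D)%N.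
Proof.
move=> m_repr; set t := quot_mod m x b; rewrite -dvdz_sqrD_nat.
have : (m%:Z %| (t%:Z ^+ 2 + D%:Z) * b%:Z ^+ 2)%Z.
  rewrite (_ : _ * _ = (t%:Z * b%:Z - x) * (t%:Z * b%:Z + x) + (x ^+ 2 + D%:Z * b%:Z ^+ 2)).
    by rewrite rpredD ?dvdz_mulr ?quot_modP.
  by ring.
by rewrite Gauss_dvdzl // coprimezE abszX absz_nat; apply: coprimeXr; rewrite coprime_sym.
Qed.

End QuotMod.

Section Normalized.
Variables (D a b c : nat).
Hypothesis sol : normalized D a b c.

Lemma normalized_prime_ndvd_b p : prime p -> p %| c -> ~~ (p %| b).
Proof.
case: sol => _ _ _ E gcd1 pp pc; apply/negP => pb.
have pa : p %| a.
  have : p %| a ^ 2 + D * b ^ 2 by rewrite E dvdn_exp.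
  by rewrite dvdn_addl ?Euclid_dvdX ?andbT // dvdn_mull // dvdn_exp.
have : p %| gcdn (gcdn a b) c by rewrite !dvdn_gcd pa pb pc.
by rewrite gcd1 dvdn1 => /eqP p1; rewrite p1 in pp.
Qed.

Lemma normalized_coprime_bc : coprime b c.
Proof.
case: sol => _ _ c_gt0 _ _; rewrite coprime_sym; apply: coprime_prime_ndvd => // p pp pc.
exact: normalized_prime_ndvd_b.
Qed.

Lemma normalized_coprime_ab : coprime a b.
Proof.
case: sol => _ b_gt0 _ E _; rewrite coprime_sym; apply: coprime_prime_ndvd => // p pp pb.
apply/negP => pa; have pc : p %| c.
  have sqr2 := @dvdn_exp 2 p _ (ltn0Sn 1).
  have : p %| c ^ 2 by rewrite -E dvdn_add ?sqr2 ?dvdn_mull ?sqr2.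
  by rewrite Euclid_dvdX // andbT.
by have := normalized_prime_ndvd_b pp pc; rewrite pb.
Qed.

Lemma normalized_prime_ndvd_D p : squarefree D -> prime p -> p %| c -> ~~ (p %| D).
Proof.
move=> sqD pp pc; apply/negP => pD; case: sol => _ _ _ E _.
have pa : p %| a.
  have : p %| a ^ 2 + D * b ^ 2 by rewrite E dvdn_exp.
  by rewrite dvdn_addl ?Euclid_dvdX ?andbT // dvdn_mulr.
have : p ^ 2 %| a ^ 2 + D * b ^ 2 by rewrite E dvdn_exp2r.
rewrite dvdn_addr ?dvdn_exp2r // Gauss_dvdl; last first.
  by rewrite coprimeXl // coprimeXr // prime_coprime // normalized_prime_ndvd_b.
by rewrite -mulnn; apply/negP/sqD.
Qed.

Lemma normalized_prime_sqrt_negD p : prime p -> p %| c -> exists x, p %| x ^ 2 + D.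
Proof.
move=> pp pc; case: sol => _ _ _ E _.
have b_p : coprime b p by rewrite coprime_sym prime_coprime // normalized_prime_ndvd_b.
exists (quot_mod p a%:Z b); apply: quot_mod_sqrt_negD => //; first exact: prime_gt0.
by rewrite dvdz_sqrD_nat E dvdn_exp.
Qed.

Lemma sqrn_mod4 x : x ^ 2 %% 4 = odd x.
Proof. by rewrite -{1}(odd_double_half x) -muln2; case: (odd x); lia. Qed.

Lemma normalized_odd : D %% 4 = 1 \/ D %% 4 = 2 -> odd c.
Proof.
move=> D4; case: sol => _ _ _ E _; apply/negPn/negP => even_c.
have odd_b : odd b.
  by have := normalized_prime_ndvd_b (isT : prime 2); rewrite !dvdn2 negbK even_c; apply.
(* [a^2 + D b^2 = c^2] is impossible modulo [4]. *)
have := congr1 (modn^~ 4) E; rewrite -modnDm -modnMm !sqrn_mod4 odd_b (negbTE even_c).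
by case: D4 => ->; case: (odd a).
Qed.

End Normalized.

Section IntRepr.
Local Open Scope ring_scope.

Lemma repr_dvd_cross_eq (D M x y x' y' : int) : 1 < D -> 0 < M ->
  x ^+ 2 + D * y ^+ 2 = M -> x' ^+ 2 + D * y' ^+ 2 = M ->
  (M %| x * y' - x' * y)%Z -> x * y' = x' * y.
Proof.
move=> D_gt1 M_gt0 xyM x'y'M /dvdzP[z zE]; apply/eqP; rewrite -subr_eq0 zE.
rewrite mulf_eq0 (gt_eqF M_gt0) orbF; apply/negP => z_neq0.
have lagrange : (x * x' + D * y * y') ^+ 2 + D * (z * M) ^+ 2 = M * M.
  by rewrite -zE -{1}xyM -x'y'M; ring.
(* [M | x y' - x' y] with [z != 0] makes the second summand at least [D M^2 > M^2]. *)
have z2_ge1 : 1 <= z ^+ 2 by clear -z_neq0; move/negP: z_neq0; nia.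
have zM_gt0 : 0 < (z * M) ^+ 2.
  by rewrite exprn_even_gt0 // mulf_neq0 ?(gt_eqF M_gt0) //; apply/negP.
have MM_le : M * M <= (z * M) ^+ 2 by rewrite exprMn -expr2 ler_peMl ?sqr_ge0.
have lt_DzM : (z * M) ^+ 2 < D * (z * M) ^+ 2 by rewrite ltr_pMl.
have S_ge0 := sqr_ge0 (x * x' + D * y * y').
by clear -lagrange MM_le lt_DzM S_ge0; lia.
Qed.

Lemma normalized_abs_repr D c (x y : int) : squarefree D -> (1 < c)%N -> coprimez x y ->
  x ^+ 2 + D%:Z * y ^+ 2 = c%:Z * c%:Z -> normalized D `|x| `|y| c.
Proof.
move=> sqD c_gt1 xy repr.
have x_neq0 : x != 0.
  apply: contraTneq xy => x0; rewrite x0 /coprimez gcd0z; apply/negP => /eqP y1.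
  have D_cc : D = (c * c)%N.
    by move: repr; rewrite x0 [y]intEsign exprMn sqrr_sign mul1r y1; lia.
  by have := sqD _ (pdiv_prime c_gt1); rewrite D_cc dvdn_mul ?pdiv_dvd.
have y_neq0 : y != 0.
  apply: contraTneq xy => y0; rewrite y0 /coprimez gcdz0; apply/negP => /eqP x1.
  by move: repr c_gt1; rewrite y0 [x]intEsign exprMn sqrr_sign mul1r x1; lia.
split; rewrite ?absz_gt0 ?(ltnW c_gt1) //; first by lia.
by move: xy; rewrite /coprimez /gcdz => /eqP[->]; rewrite gcd1n.
Qed.

Lemma abs_sign_repr (x y t : int) :
  t * (absz y)%:Z - (-1) ^+ ((x < 0)%R (+) (y < 0)%R) * (absz x)%:Z =
  (-1) ^+ (y < 0)%R * (t * y - x).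
Proof. by rewrite !abszEsign signr_addb; case: (x < 0)%R; case: (y < 0)%R; rewrite /=; ring. Qed.

End IntRepr.

Lemma coprime_cross_eq a b a' b' : 0 < a -> coprime a b -> coprime a' b' ->
  a * b' = a' * b -> a = a' /\ b = b'.
Proof.
move=> a_gt0 ab a'b' E.
have a_a' : a %| a' by rewrite -(Gauss_dvdl _ ab) -E dvdn_mulr.
have a'_a : a' %| a by rewrite -(Gauss_dvdl _ a'b') E dvdn_mulr.
have a_eq : a = a' by apply/eqP; rewrite eqn_dvd a_a' a'_a.
by split=> //; apply/eqP; rewrite -(eqn_pmul2l a_gt0) E -a_eq.
Qed.

Lemma sign_nat_inj (e e' : bool) (n n' : nat) : 0 < n ->
  ((-1) ^+ e * n%:Z = (-1) ^+ e' * n'%:Z)%R -> e = e' /\ n = n'.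
Proof.
move=> n_gt0 E; have n_eq : n = n' by move/(congr1 absz): E; rewrite !abszMsign.
split=> //; move: E; rewrite -n_eq => /(mulIf _) E.
by apply: signr_inj; apply: E; rewrite -lt0n.
Qed.

Definition normalized_sols (D c : nat) : seq (nat * nat) :=
  [seq ab <- [seq (a, b) | a <- iota 1 c, b <- iota 1 c] |
     (ab.1 ^ 2 + D * ab.2 ^ 2 == c ^ 2) && (gcdn (gcdn ab.1 ab.2) c == 1)].

Lemma normalized_sols_uniq D c : uniq (normalized_sols D c).
Proof.
rewrite filter_uniq // allpairs_uniq ?iota_uniq //.
by move=> [? ?] [? ?] _ _ [-> ->].
Qed.

Lemma mem_normalized_sols D c a b : 0 < D ->
  (a, b) \in normalized_sols D c <-> normalized D a b c.
Proof.
move=> D_gt0; rewrite mem_filter /=; split.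
- case/andP => /andP[/eqP E /eqP gcd1] /allpairsP[[a' b'] /= [ha hb [aE bE]]].
  move: ha hb; rewrite !mem_iota -aE -bE => /andP[a_gt0 a_lt] /andP[b_gt0 _].
  by split=> //; rewrite -ltnS (leq_trans _ a_lt).
- case=> a_gt0 b_gt0 _ E gcd1; rewrite E gcd1 !eqxx /=; apply/allpairsP.
  exists (a, b); rewrite !mem_iota a_gt0 b_gt0 !add1n !ltnS /=.
  by split=> //; rewrite -(leq_exp2r _ _ (ltn0Sn 1)) -E ?leq_addr //;
    rewrite (leq_trans _ (leq_addl _ _)) // leq_pmull.
Qed.

Definition sol_root (c : nat) (y : nat * nat * bool) : nat :=
  quot_mod (c ^ 2) ((-1) ^+ y.2 * y.1.1%:Z)%R y.1.2.

Section Count.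
Variables (D c : nat).
Hypotheses (D_gt1 : 1 < D) (sqD : squarefree D) (el : classgroup_elem2 D) (c_gt1 : 1 < c).
Hypothesis c_S : forall p, prime p -> p %| c -> inS D p.

Let signed_sols := [seq (ab, e) | ab <- normalized_sols D c, e <- [:: true; false]].

Let c2_gt0 : 0 < c ^ 2. Proof. by rewrite expn_gt0 ltnW. Qed.

Let signed_solP y : y \in signed_sols -> normalized D y.1.1 y.1.2 c.
Proof.
by case/allpairsP=> -[[a b] e] [/= ab _ ->]; apply/(mem_normalized_sols _ _ _ (ltnW D_gt1)).
Qed.

Let sol_coprime y : y \in signed_sols -> coprime y.1.2 (c ^ 2).
Proof. by move/signed_solP/normalized_coprime_bc; apply: coprimeXr. Qed.

Let sol_repr y : y \in signed_sols ->
  (((-1) ^+ y.2 * y.1.1%:Z) ^+ 2 + D%:Z * y.1.2%:Z ^+ 2 = (c ^ 2)%N%:Z)%R.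
Proof. by case/signed_solP=> _ _ _ E _; rewrite exprMn sqrr_sign mul1r -E; lia. Qed.

Lemma sol_root_sqrt_negD y : y \in signed_sols -> sol_root c y \in sqrt_negD D (c ^ 2).
Proof.
move=> ys; rewrite mem_sqrt_negD quot_mod_lt // quot_mod_sqrt_negD ?sol_coprime //.
by rewrite sol_repr.
Qed.

Lemma sol_root_inj : {in signed_sols &, injective (sol_root c)}.
Proof.
move=> [[a b] e] [[a' b'] e'] ys ys' rootE; set t := sol_root c (a, b, e).
have r : ((c ^ 2)%N%:Z %| (t%:Z * b%:Z - (-1) ^+ e * a%:Z)%R)%Z.
  exact: quot_modP _ c2_gt0 (sol_coprime ys).
have r' : ((c ^ 2)%N%:Z %| (t%:Z * b'%:Z - (-1) ^+ e' * a'%:Z)%R)%Z.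
  by rewrite /t rootE; exact: quot_modP _ c2_gt0 (sol_coprime ys').
have cross : ((c ^ 2)%N%:Z %| ((-1) ^+ e * a%:Z * b'%:Z - (-1) ^+ e' * a'%:Z * b%:Z)%R)%Z.
  rewrite (_ : (_ - _ = (t%:Z * b'%:Z - (-1) ^+ e' * a'%:Z) * b%:Z
                      - (t%:Z * b%:Z - (-1) ^+ e * a%:Z) * b'%:Z)%R).
    by rewrite rpredB ?dvdz_mulr.
  by ring.
have /= [a_gt0 _ _ _ _] := signed_solP ys; have /= [_ b'_gt0 _ _ _] := signed_solP ys'.
have D_gt1' : (1 < D%:Z)%R by rewrite ltz_nat.
have c2_gt0' : (0 < (c ^ 2)%N%:Z)%R by rewrite ltz_nat.
have := repr_dvd_cross_eq D_gt1' c2_gt0' (sol_repr ys) (sol_repr ys') cross.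
move=> /=; rewrite -!mulrA -!PoszM => /sign_nat_inj[|e_eq abE].
  by rewrite muln_gt0 a_gt0 b'_gt0.
have [-> ->] := @coprime_cross_eq a b a' b' a_gt0 (normalized_coprime_ab (signed_solP ys))
  (normalized_coprime_ab (signed_solP ys')) abE.
by rewrite e_eq.
Qed.

Let c_odd : odd c.
Proof.
rewrite -coprimen2; apply: coprime_prime_ndvd => [|p pp pc]; first exact: ltnW.
by rewrite -prime_coprime // coprimen2; case/(inSP D pp): (c_S pp pc).
Qed.

Let coprime_c_2root t : t \in sqrt_negD D (c ^ 2) -> coprime c (2 * t).
Proof.
rewrite mem_sqrt_negD => /andP[_ ct]; rewrite coprimeMr coprimen2 c_odd.
apply: coprime_prime_ndvd => [|p pp pc]; first exact: ltnW.
have [_ pD _] := (inSP D pp).1 (c_S pp pc).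
exact: prime_ndvd_sqrt_negD pD (dvdn_trans (dvdn_trans pc (dvdn_exp _ (dvdnn c))) ct).
Qed.

Lemma sol_root_surj t : t \in sqrt_negD D (c ^ 2) -> t \in map (sol_root c) signed_sols.
Proof.
move=> tS; have := tS; rewrite mem_sqrt_negD => /andP[t_lt ct].
have c2E : ((c ^ 2)%N%:Z = c%:Z * c%:Z)%R by rewrite -PoszM mulnn.
have [x [y [repr ct_yx xy]]] : exists x y : int, [/\ (x ^+ 2 + D%:Z * y ^+ 2 = c%:Z * c%:Z)%R,
    (c%:Z * c%:Z %| (t%:Z * y - x)%R)%Z & coprimez x y].
  (* [//] also closes [(c * c %| t ^+ 2 + D)%Z], which is [ct] up to conversion. *)
  apply: elem2_root_repr => //; first by rewrite ltz_nat ltnW.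
  by rewrite coprimezE abszM coprime_c_2root.
set e := ((x < 0) (+) (y < 0))%R.
have ys : (`|x|, `|y|, e) \in signed_sols.
  apply/allpairsP; exists ((`|x|, `|y|), e) => /=.
  rewrite (mem_normalized_sols _ _ _ (ltnW D_gt1)).2; last exact: normalized_abs_repr.
  by case: e.
apply/mapP; exists (`|x|, `|y|, e) => //; apply: quot_mod_unique t_lt _ => //.
  exact: sol_coprime ys.
by rewrite /= abs_sign_repr c2E dvdz_mull.
Qed.

Lemma size_normalized_sols : size (normalized_sols D c) = 2 ^ (size (primes c)).-1.
Proof.
have primes_c2 : primes (c ^ 2) = primes c by rewrite primesX.
have double : size (normalized_sols D c) * 2 = 2 ^ size (primes c).
  rewrite -primes_c2 -(@size_sqrt_negD D (c ^ 2)) //; last first.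
    by move=> p pp; rewrite Euclid_dvdX // andbT; apply: c_S.
  have -> : size (normalized_sols D c) * 2 = size (map (sol_root c) signed_sols).
    by rewrite size_map size_allpairs.
  apply/perm_size/uniq_perm; last 1 first.
  - move=> t; apply/mapP/idP => [[y ys ->]|/sol_root_surj/mapP //].
    exact: sol_root_sqrt_negD.
  - rewrite map_inj_in_uniq; last exact: sol_root_inj.
    by rewrite allpairs_uniq ?normalized_sols_uniq // => -[? ?] [? ?] _ _ [-> ->].
  - exact: sqrt_negD_uniq.
have : pdiv c \in primes c by rewrite mem_primes pdiv_prime // (ltnW c_gt1) pdiv_dvd.
case: (primes c) double => [|p ps] double pc; first by rewrite in_nil in pc.
by move: double; rewrite /= expnS mulnC => /eqP; rewrite eqn_pmul2l // => /eqP.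
Qed.

End Count.

Unset Implicit Arguments.
Local Open Scope ring_scope.

Theorem theorem4p1 (D c : nat) :
  (1 < D)%N -> squarefree D ->
  ((- D%:Z) %% 4)%Z = 2 \/ ((- D%:Z) %% 4)%Z = 3 ->
  classgroup_elem2 D ->
  (1 < c)%N ->
  ((exists a b : nat, normalized D a b c) <->
     (forall p : nat, prime p -> (p %| c)%N -> inS D p)) /\
  ((forall p : nat, prime p -> (p %| c)%N -> inS D p) ->
     exists s : seq (nat * nat),
       [/\ uniq s,
           (forall a b : nat, (a, b) \in s <-> normalized D a b c) &
           size s = (2 ^ (size (primes c)).-1)%N]).
Proof.
move=> D_gt1 sqD negD_mod4 el c_gt1.
have D_mod4 : (D %% 4 = 1 \/ D %% 4 = 2)%N by case: negD_mod4 => ?; [right | left]; lia.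
have count (S : forall p, prime p -> (p %| c)%N -> inS D p) :
  exists s : seq (nat * nat), [/\ uniq s,
    (forall a b : nat, (a, b) \in s <-> normalized D a b c) &
    size s = (2 ^ (size (primes c)).-1)%N].
  exists (normalized_sols D c); split; first exact: normalized_sols_uniq.
    by move=> a b; apply: mem_normalized_sols; apply: ltnW.
  exact: size_normalized_sols D_gt1 sqD el c_gt1 S.
split; last exact: count.
split=> [[a [b sol]] p pp pc | S].
  apply/(inSP D pp); split.
  - exact: (dvdn_odd pc (normalized_odd sol D_mod4)).
  - exact: (normalized_prime_ndvd_D sol sqD pp pc).
  - exact: (normalized_prime_sqrt_negD sol pp pc).
have [[|[a b] s] [_ sP size_s]] := count S.
  by have := expn_gt0 2 (size (primes c)).-1; rewrite -size_s.
by exists a, b; apply/sP; rewrite inE eqxx.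
Qed.
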